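(* Let $K\subseteq\mathbb{R}^m$ be closed, $G:\mathbb{R}^n\to\mathbb{R}^m$ locally Lipschitz continuous and second-order directionally differentiable at $x^*$, $\Psi=\{x:G(x)\in K\}$, $x^*\in\Psi$. If MSCQ for $\Psi$ holds at $x^*$, then for any $d\in\mathbb{R}^n$, $$\mathcal{T}^2_\Psi(x^*;d)=\{w\in\mathbb{R}^n: G''(x^*;d,w)\in\mathcal{T}^2_K(G(x^* );G'(x^*;d))\}.$$
   Context: $G'(x;d)=\lim_{t\downarrow0}(G(x+td)-G(x))/t$; $G''(x;d,w)=\lim_{t\downarrow0}\frac{G(x+td+\frac12t^2w)-G(x)-tG'(x;d)}{\frac12t^2}$; second-order directionally differentiable at $x$ means these limits exist for all $d,w$. Outer second-order tangent set of $C$ at $x$ in direction $d$: $\mathcal{T}^2_C(x;d)=\{w:\exists t_k\downarrow0,w^k\to w,x+t_kd+\frac12t_k^2w^k\in C\}$. MSCQ for $\Psi$ at $x^*$: there exist a neighborhood $U$ of $x^*$ and $\kappa>0$ with $\mathrm{dist}(x,\Psi)\le\kappa\,\mathrm{dist}(G(x),K)$ for all $x\in U$. *)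

From HB Require Import structures.
From mathcomp Require Import all_boot all_order all_algebra.
From mathcomp Require Import all_classical all_reals all_analysis.
Set Implicit Arguments. Unset Strict Implicit. Unset Printing Implicit Defensive.
Import Order.TTheory GRing.Theory Num.Theory.
Import numFieldNormedType.Exports.
Local Open Scope classical_set_scope.
Local Open Scope ring_scope.

Definition enorm {R : realType} {n : nat} (x : 'rV[R]_n) : R :=
  Num.sqrt (\sum_(i < n) x ord0 i ^+ 2).

Definition edist {R : realType} {n : nat} (x : 'rV[R]_n) (S : set 'rV[R]_n) : R :=
  inf [set enorm (x - y) | y in S].

Definition locally_lipschitz {R : realType} {n m : nat} (G : 'rV[R]_n -> 'rV[R]_m) :=
  forall x : 'rV[R]_n, exists r : R, exists L : R, 0 < r /\
    forall y z, enorm (y - x) < r -> enorm (z - x) < r ->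
      enorm (G y - G z) <= L * enorm (y - z).

Definition dquot1 {R : realType} {n m : nat} (G : 'rV[R]_n -> 'rV[R]_m)
  (x d : 'rV[R]_n) : R -> 'rV[R]_m :=
  fun t => t^-1 *: (G (x + t *: d) - G x).

Definition ddir {R : realType} {n m : nat} (G : 'rV[R]_n -> 'rV[R]_m)
  (x d : 'rV[R]_n) : 'rV[R]_m :=
  lim (dquot1 G x d @ 0^'+).

Definition dquot2 {R : realType} {n m : nat} (G : 'rV[R]_n -> 'rV[R]_m)
  (x d w : 'rV[R]_n) : R -> 'rV[R]_m :=
  fun t => ((t ^+ 2) / 2)^-1 *:
    (G (x + t *: d + ((t ^+ 2) / 2) *: w) - G x - t *: ddir G x d).

Definition ddir2 {R : realType} {n m : nat} (G : 'rV[R]_n -> 'rV[R]_m)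
  (x d w : 'rV[R]_n) : 'rV[R]_m :=
  lim (dquot2 G x d w @ 0^'+).

Definition so_dir_diff {R : realType} {n m : nat} (G : 'rV[R]_n -> 'rV[R]_m)
  (x : 'rV[R]_n) : Prop :=
  forall d : 'rV[R]_n,
    (exists v : 'rV[R]_m, dquot1 G x d @ 0^'+ --> v) /\
    (forall w : 'rV[R]_n, exists v : 'rV[R]_m, dquot2 G x d w @ 0^'+ --> v).

Definition tangent2 {R : realType} {n : nat} (C : set 'rV[R]_n) (x d : 'rV[R]_n)
  : set 'rV[R]_n :=
  [set w | exists (t : nat -> R) (ws : nat -> 'rV[R]_n),
     [/\ (forall k, 0 < t k), t @ \oo --> 0, ws @ \oo --> w &
         forall k, C (x + t k *: d + ((t k ^+ 2) / 2) *: ws k)]].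

Definition MSCQ {R : realType} {n m : nat} (G : 'rV[R]_n -> 'rV[R]_m)
  (K : set 'rV[R]_m) (xs : 'rV[R]_n) : Prop :=
  exists U : set 'rV[R]_n, nbhs xs U /\
    exists kappa : R, 0 < kappa /\
      forall x, U x -> edist x (G @^-1` K) <= kappa * edist (G x) K.

From Pilot Require Import Defs.
From HB Require Import structures.
From mathcomp Require Import all_boot all_order all_algebra.
From mathcomp Require Import all_classical all_reals all_analysis.
From mathcomp.algebra_tactics Require Import ring.
Import Order.TTheory GRing.Theory Num.Theory.
Import numFieldNormedType.Exports.
Local Open Scope classical_set_scope.
Local Open Scope ring_scope.

(* A vector w lies in T^2_C(x; d) exactly when some t_k -> 0+ admits points of C
   at distance o(t_k^2) from x + t_k d + t_k^2/2 w.  Let z_t = x0 + t d + t^2/2 w.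
   By the definition of G'', G(z_t) = G(x0) + t G'(x0; d) + t^2/2 G''(x0; d, w)
   + o(t^2).  Points of Psi that are o(t^2)-close to z_t are mapped by the locally
   Lipschitz G to points of K that are o(t^2)-close to G(z_t).  Conversely, points
   of K that are o(t^2)-close to G(z_t) give dist(G(z_t), K) = o(t^2), which MSCQ
   turns into dist(z_t, Psi) = o(t^2). *)

Section EuclideanNorm.
Context {R : realType} {n : nat}.
Implicit Types (x y : 'rV[R]_n) (S : set 'rV[R]_n).

Lemma enorm_ge0 x : 0 <= enorm x.
Proof. exact: sqrtr_ge0. Qed.

Lemma enormZ (a : R) x : enorm (a *: x) = `|a| * enorm x.
Proof.
rewrite /enorm -sqrtr_sqr -sqrtrM ?sqr_ge0 //; congr Num.sqrt.
by rewrite mulr_sumr; apply: eq_bigr => i _; rewrite mxE exprMn.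
Qed.

Lemma enormN x : enorm (- x) = enorm x.
Proof. by rewrite -scaleN1r enormZ normrN1 mul1r. Qed.

Lemma mxnorm_le_enorm x : `|x| <= enorm x.
Proof.
rewrite [`|x|]mx_normrE; apply: bigmax_le => [|[i j] _]; first exact: enorm_ge0.
rewrite /= (ord1 i) /enorm -sqrtr_sqr ler_wsqrtr // (bigD1 j) //= lerDl.
by apply: sumr_ge0 => k _; rewrite sqr_ge0.
Qed.

Lemma enorm_le_mxnorm x : enorm x <= n%:R * `|x|.
Proof.
rewrite /enorm -[n%:R * _]ger0_norm ?mulr_ge0 // -sqrtr_sqr ler_wsqrtr //.
apply: (@le_trans _ _ (\sum_(i < n) `|x| ^+ 2)).
  apply: ler_sum => i _; rewrite -real_normK ?num_real // lerXn2r ?nnegrE //.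
  rewrite [`|x|]mx_normrE.
  exact: (le_bigmax _ (fun ij : 'I_1 * 'I_n => `|x ij.1 ij.2|) (ord0, i)).
rewrite sumr_const card_ord -[_ *+ n]mulr_natl exprMn ler_wpM2r ?sqr_ge0 //.
by case: n x => [|k] x; rewrite ?expr0n // expr2 ler_peMl // ler1n.
Qed.

Lemma cvgr0_enorm_lt {T} {F : set_system T} {FF : Filter F} (u : T -> 'rV[R]_n) :
  u @ F --> (0 : 'rV[R]_n) -> forall e, 0 < e -> \forall k \near F, enorm (u k) < e.
Proof.
move=> u0 e e_gt0; have n1_gt0 : 0 < n.+1%:R :> R by [].
near=> k.
have uk : `|u k| < e / n.+1%:R.
  by near: k; apply: cvgr0_norm_lt; rewrite ?divr_gt0.
apply: le_lt_trans (enorm_le_mxnorm _) _.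
apply: (@le_lt_trans _ _ (n.+1%:R * `|u k|)); first by rewrite ler_wpM2r // ler_nat.
by rewrite mulrC -ltr_pdivlMr.
Unshelve. all: by end_near.
Qed.

Lemma cvgr0Penorm_lt {T} {F : set_system T} {FF : Filter F} (u : T -> 'rV[R]_n) :
  u @ F --> (0 : 'rV[R]_n) <->
  forall e, 0 < e -> \forall k \near F, enorm (u k) < e.
Proof.
split=> [|u_small]; first exact: cvgr0_enorm_lt.
apply/cvgr0Pnorm_lt => e e_gt0; apply: filterS (u_small e e_gt0) => k.
exact/le_lt_trans/mxnorm_le_enorm.
Qed.

Lemma edist_le x S y : S y -> Defs.edist x S <= enorm (x - y).
Proof.
move=> Sy; apply: ge_inf; last by exists y.
by exists 0 => _ [z _ <-]; exact: enorm_ge0.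
Qed.

Lemma edist_approx x S y0 e : S y0 -> 0 < e ->
  exists y, S y /\ enorm (x - y) < Defs.edist x S + e.
Proof.
move=> Sy0 e_gt0.
have S_ne : [set enorm (x - y) | y in S] !=set0 by exists (enorm (x - y0)), y0.
have lt_e : Defs.edist x S < Defs.edist x S + e by rewrite ltrDl.
have [_ [y Sy <-] lty] := inf_lt S_ne lt_e.
by exists y.
Qed.

End EuclideanNorm.

Section SecondOrderArc.
Context {R : realType}.

Definition halfsq (t : R) : R := t ^+ 2 / 2.

Lemma halfsq_gt0 {t} : 0 < t -> 0 < halfsq t.
Proof. by move=> t_gt0; rewrite divr_gt0 // exprn_gt0. Qed.

Lemma halfsq_cvg0 {T} {F : set_system T} {FF : Filter F} {t : T -> R} :
  t @ F --> 0 -> halfsq \o t @ F --> 0.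
Proof.
move=> t0; have -> : 0 = halfsq 0 by rewrite /halfsq expr0n mul0r.
exact: cvgM (cvgM t0 t0) (cvg_cst _).
Qed.

Definition arc2 {n} (x d w : 'rV[R]_n) (t : R) : 'rV[R]_n :=
  x + t *: d + halfsq t *: w.

Lemma arc2B {n} (x d w w' : 'rV[R]_n) t :
  arc2 x d w t - arc2 x d w' t = halfsq t *: (w - w').
Proof. by rewrite /arc2 opprD addrACA subrr add0r scalerBr. Qed.

Lemma arc2_cvg {T} {F : set_system T} {FF : Filter F} {n} (x d w : 'rV[R]_n)
    {t : T -> R} :
  t @ F --> 0 -> arc2 x d w \o t @ F --> x.
Proof.
move=> t0; have x_eq : x = x + 0 *: d + 0 *: w by rewrite !scale0r !addr0.
rewrite [X in _ --> X]x_eq.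
have -> : arc2 x d w \o t =
  (cst x + (fun k => t k *: d)) + (fun k => halfsq (t k) *: w) by [].
apply: cvgD; first exact: cvgD (cvg_cst _) (cvgZ t0 (cvg_cst _)).
by apply: cvgZ; [exact: halfsq_cvg0 | exact: cvg_cst].
Qed.

Lemma arc2_dquot2 {n m} (G : 'rV[R]_n -> 'rV[R]_m) x d w v t : t != 0 ->
  (halfsq t)^-1 *: (G (arc2 x d w t) - arc2 (G x) (ddir G x d) v t) =
  dquot2 G x d w t - v.
Proof.
move=> t_neq0; rewrite /dquot2 /arc2 -/(halfsq t).
have : halfsq t != 0 by rewrite mulf_neq0 ?expf_neq0 ?invr_eq0.
move: (halfsq t) => Q Q_neq0.
by apply/rowP => i; rewrite !mxE; field.
Qed.

End SecondOrderArc.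

Lemma cvg_at_right0_seq {R : realType} {t : nat -> R} :
  (forall k, 0 < t k) -> t @ \oo --> 0 -> t @ \oo --> 0^'+.
Proof.
move=> t_gt0 t0 A /t0; rewrite /= /nbhs /=.
by apply: filterS => k; apply; exact: t_gt0.
Qed.

Lemma dquot2_cvg_seq {R : realType} {n m : nat} {G : 'rV[R]_n -> 'rV[R]_m}
    {x : 'rV[R]_n} (d w : 'rV[R]_n) {t : nat -> R} :
  so_dir_diff G x -> (forall k, 0 < t k) -> t @ \oo --> 0 ->
  dquot2 G x d w \o t @ \oo --> ddir2 G x d w.
Proof.
move=> Gdd t_gt0 t0; have [_ /(_ w) [v dq_v]] := Gdd d.
rewrite /ddir2 (cvg_lim _ dq_v) //.
exact: cvg_comp _ _ (cvg_at_right0_seq t_gt0 t0) dq_v.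
Qed.

Lemma tangent2P {R : realType} {n : nat} (C : set 'rV[R]_n) (x d w : 'rV[R]_n) :
  tangent2 C x d w <->
  exists (t : nat -> R) (c : nat -> 'rV[R]_n),
    [/\ forall k, 0 < t k, t @ \oo --> 0, forall k, C (c k) &
        (fun k => (halfsq (t k))^-1 *: (c k - arc2 x d w (t k))) @ \oo
          --> (0 : 'rV[R]_n)].
Proof.
split=> [[t [ws [t_gt0 t0 ws_w Cws]]]|[t [c [t_gt0 t0 Cc c_o]]]].
  exists t, (fun k => arc2 x d (ws k) (t k)); split=> //.
  under eq_fun do rewrite arc2B scalerK ?gt_eqF ?halfsq_gt0 //.
  exact/subr_cvg0.
pose ws k := w + (halfsq (t k))^-1 *: (c k - arc2 x d w (t k)).
have arc2_ws k : arc2 x d (ws k) (t k) = c k.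
  have q_neq0 : halfsq (t k) != 0 by rewrite gt_eqF ?halfsq_gt0.
  apply: (addIr (- arc2 x d w (t k))).
  by rewrite arc2B /ws [w + _]addrC addrK scalerKV.
exists t, ws; split=> // [|k].
  by rewrite -[w in _ --> w]addr0; apply: cvgD => //; exact: cvg_cst.
by rewrite -[C _]/(C (arc2 x d (ws k) (t k))) arc2_ws.
Qed.

Section LittleoTransfer.
Context {R : realType} {n m : nat} {G : 'rV[R]_n -> 'rV[R]_m}.

Lemma lipschitz_cvg0 {T} {F : set_system T} {FF : Filter F} (x : 'rV[R]_n)
    (a b : T -> 'rV[R]_n) (s : T -> R) :
  locally_lipschitz G -> (forall i, 0 < s i) -> s @ F --> 0 -> b @ F --> x ->
  (fun i => (s i)^-1 *: (a i - b i)) @ F --> (0 : 'rV[R]_n) ->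
  (fun i => (s i)^-1 *: (G (a i) - G (b i))) @ F --> (0 : 'rV[R]_m).
Proof.
move=> Glip s_gt0 s0 b_x ab_o.
have a_x : a @ F --> x.
  have -> : a = (fun i => b i + s i *: ((s i)^-1 *: (a i - b i))).
    by apply/funext => i; rewrite scalerKV ?gt_eqF // subrKC.
  by rewrite -[x]addr0 -(scaler0 _ 0); apply: cvgD => //; exact: cvgZ.
have [r [L [r_gt0 lipL]]] := Glip x.
apply/cvgr0Penorm_lt => e e_gt0.
have M_gt0 : 0 < `|L| + 1 by rewrite ltr_wpDl.
near=> i.
have ai : enorm (a i - x) < r.
  by near: i; apply: cvgr0_enorm_lt => //; exact/subr_cvg0.
have bi : enorm (b i - x) < r.
  by near: i; apply: cvgr0_enorm_lt => //; exact/subr_cvg0.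
have abi : enorm ((s i)^-1 *: (a i - b i)) < e / (`|L| + 1).
  by near: i; apply: cvgr0_enorm_lt => //; rewrite divr_gt0.
have si_inv : 0 <= (s i)^-1 by rewrite invr_ge0 ltW.
rewrite enormZ ger0_norm //.
apply: le_lt_trans (ler_wpM2l si_inv (lipL _ _ ai bi)) _.
rewrite mulrCA -(ger0_norm si_inv) -enormZ.
apply: (@le_lt_trans _ _ ((`|L| + 1) * enorm ((s i)^-1 *: (a i - b i)))).
  by rewrite ler_wpM2r ?enorm_ge0 // (le_trans (ler_norm L)) // lerDl.
by rewrite mulrC -ltr_pdivlMr.
Unshelve. all: by end_near.
Qed.

Lemma MSCQ_cvg0 {K : set 'rV[R]_m} {xs : 'rV[R]_n} {z : nat -> 'rV[R]_n}
    {c : nat -> 'rV[R]_m} {s : nat -> R} :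
  MSCQ G K xs -> K (G xs) -> (forall k, 0 < s k) -> z @ \oo --> xs ->
  (forall k, K (c k)) ->
  (fun k => (s k)^-1 *: (G (z k) - c k)) @ \oo --> (0 : 'rV[R]_m) ->
  exists y : nat -> 'rV[R]_n, (forall k, K (G (y k))) /\
    (fun k => (s k)^-1 *: (y k - z k)) @ \oo --> (0 : 'rV[R]_n).
Proof.
move=> [U [U_xs [kap [kap_gt0 subreg]]]] K_Gxs s_gt0 z_xs Kc Gzc_o.
(* The infimum need not be attained; the slack [s k * harmonic k] is o(s k). *)
have /choice [y yP] k : exists y, (G @^-1` K) y /\
    enorm (z k - y) < Defs.edist (z k) (G @^-1` K) + s k * harmonic k.
  by apply: edist_approx K_Gxs _; rewrite mulr_gt0 ?harmonic_gt0.
exists y; split=> [k|]; first by case: (yP k).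
apply/cvgr0Penorm_lt => e e_gt0.
have e2_gt0 : 0 < e / 2 by rewrite divr_gt0.
near=> k.
have zU : U (z k) by near: k; exact: z_xs.
have Gzc : enorm ((s k)^-1 *: (G (z k) - c k)) < e / 2 / kap.
  by near: k; apply: cvgr0_enorm_lt => //; rewrite divr_gt0.
have hk : harmonic k < e / 2 by near: k; exact: cvgr_lt cvg_harmonic _ e2_gt0.
have [_ yk] := yP k.
have sk_inv : 0 <= (s k)^-1 by rewrite invr_ge0 ltW.
have dist_zk : Defs.edist (z k) (G @^-1` K) <= kap * enorm (G (z k) - c k).
  exact: le_trans (subreg _ zU) (ler_wpM2l (ltW kap_gt0) (edist_le _ _ _ (Kc k))).
rewrite enormZ ger0_norm // -enormN opprB.
apply: (@lt_le_trans _ _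
  ((s k)^-1 * (Defs.edist (z k) (G @^-1` K) + s k * harmonic k))).
  by rewrite ltr_pM2l // invr_gt0.
rewrite mulrDr mulrA mulVf ?gt_eqF // mul1r [e]splitr lerD ?ltW //.
apply: le_lt_trans (ler_wpM2l sk_inv dist_zk) _.
by rewrite mulrCA -(ger0_norm sk_inv) -enormZ mulrC -ltr_pdivlMr.
Unshelve. all: by end_near.
Qed.

End LittleoTransfer.

Section PreimageTangent.
Context {R : realType} {n m : nat} {G : 'rV[R]_n -> 'rV[R]_m} {K : set 'rV[R]_m}.
Context {xs : 'rV[R]_n} (d w : 'rV[R]_n).

Lemma tangent2_preimage_sub : locally_lipschitz G -> so_dir_diff G xs ->
  tangent2 (G @^-1` K) xs d w -> tangent2 K (G xs) (ddir G xs d) (ddir2 G xs d w).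
Proof.
move=> Glip Gdd /tangent2P [t [c [t_gt0 t0 Kc c_o]]]; apply/tangent2P.
have q_gt0 k := halfsq_gt0 (t_gt0 k).
exists t, (G \o c); split=> //.
have -> : (fun k => (halfsq (t k))^-1 *:
    ((G \o c) k - arc2 (G xs) (ddir G xs d) (ddir2 G xs d w) (t k))) =
  (fun k => (halfsq (t k))^-1 *: (G (c k) - G (arc2 xs d w (t k))) +
    (dquot2 G xs d w (t k) - ddir2 G xs d w)).
  by apply/funext => k; rewrite -arc2_dquot2 ?gt_eqF // -scalerDr subrKA.
rewrite -[0]addr0; apply: cvgD.
  exact: lipschitz_cvg0 Glip q_gt0 (halfsq_cvg0 t0) (arc2_cvg _ _ _ t0) c_o.
exact/subr_cvg0/(dquot2_cvg_seq d w Gdd t_gt0 t0).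
Qed.

Lemma tangent2_preimage_sup : MSCQ G K xs -> K (G xs) -> so_dir_diff G xs ->
  tangent2 K (G xs) (ddir G xs d) (ddir2 G xs d w) -> tangent2 (G @^-1` K) xs d w.
Proof.
move=> Gmscq K_Gxs Gdd /tangent2P [t [c [t_gt0 t0 Kc c_o]]]; apply/tangent2P.
have q_gt0 k := halfsq_gt0 (t_gt0 k).
have Gzc_o : (fun k => (halfsq (t k))^-1 *: (G (arc2 xs d w (t k)) - c k))
    @ \oo --> (0 : 'rV[R]_m).
  have -> : (fun k => (halfsq (t k))^-1 *: (G (arc2 xs d w (t k)) - c k)) =
    (fun k => (dquot2 G xs d w (t k) - ddir2 G xs d w) - (halfsq (t k))^-1 *:
      (c k - arc2 (G xs) (ddir G xs d) (ddir2 G xs d w) (t k))).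
    by apply/funext => k; rewrite -arc2_dquot2 ?gt_eqF // -scalerBr opprB subrKA.
  rewrite -[0]subr0; apply: cvgB c_o.
  exact/subr_cvg0/(dquot2_cvg_seq d w Gdd t_gt0 t0).
have [y [Ky y_o]] := MSCQ_cvg0 Gmscq K_Gxs q_gt0 (arc2_cvg xs d w t0) Kc Gzc_o.
by exists t, y.
Qed.

End PreimageTangent.

Theorem proposition3p2 (R : realType) (n m : nat)
  (K : set 'rV[R]_m) (G : 'rV[R]_n -> 'rV[R]_m) (xs : 'rV[R]_n) :
  closed K ->
  locally_lipschitz G ->
  so_dir_diff G xs ->
  K (G xs) ->
  MSCQ G K xs ->
  forall d : 'rV[R]_n,
    tangent2 (G @^-1` K) xs d =
    [set w | tangent2 K (G xs) (ddir G xs d) (ddir2 G xs d w)].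
Proof.
move=> _ Glip Gdd K_Gxs Gmscq d; rewrite eqEsubset; split=> w.
- exact: tangent2_preimage_sub.
- exact: tangent2_preimage_sup.
Qed.
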